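(* Let $q$ be a prime power, let $1\le t<k\le m$ be integers, and let $M\in\mathrm{Mat}(t\times k,\mathbb{F}_{q^m})$ be a full-rank matrix almost in row-reduced echelon form, with rows $M_1,\dots,M_t$. Assume that $M_1$ has at least one entry in $\mathbb{F}_{q^m}\setminus\mathbb{F}_q$. Then there exist $\mathbb{F}_q$-linearly independent elements $\alpha_1,\dots,\alpha_t\in\mathbb{F}_{q^m}$ such that $\mathrm{rk}\left(\sum_{i=1}^t\alpha_iM_i\right)\ge t+1$.
   Context: For $v\in\mathbb{F}_{q^m}^k$, $\mathrm{rk}(v):=\dim_{\mathbb{F}_q}\mathrm{Span}_{\mathbb{F}_q}\{v_1,\dots,v_k\}$. A matrix is in row-reduced echelon form if each row has more initial zeros than the previous rows, and the first non-zero entry of any non-zero row equals $1$ and is the only non-zero entry in its column. A $t\times k$ matrix $M$ is almost in row-reduced echelon form if the matrix obtained by permuting its rows by some permutation of $\{1,\dots,t\}$ is in row-reduced echelon form. *)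

From HB Require Import structures.
From mathcomp Require Import all_boot all_order all_algebra all_fingroup all_field.
Set Implicit Arguments. Unset Strict Implicit. Unset Printing Implicit Defensive.
Import GRing.Theory.
Local Open Scope ring_scope.

(* Setting: F plays the role of F_q (a finite field), L the role of F_{q^m},
   a field extension of F of dimension m = \dim {:L}. *)

(* Number of initial zeros of row i of A (equals k for a zero row). *)
Definition lead_zeros (R : nzRingType) (t k : nat) (A : 'M[R]_(t, k)) (i : 'I_t) : nat :=
  find (fun j : 'I_k => A i j != 0) (enum 'I_k).

(* Row-reduced echelon form: each (nonzero) row has more initial zeros than the
   previous rows (this forces zero rows to the bottom), and the first nonzero
   entry of each nonzero row is 1 and is the only nonzero entry in its column. *)
Definition is_rref (R : nzRingType) (t k : nat) (A : 'M[R]_(t, k)) : Prop :=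
  (forall i1 i2 : 'I_t, (i1 < i2)%N -> row i2 A != 0 ->
      (lead_zeros A i1 < lead_zeros A i2)%N)
  /\ (forall (i : 'I_t) (j : 'I_k), A i j != 0 ->
        (forall j' : 'I_k, (j' < j)%N -> A i j' = 0) ->
        A i j = 1 /\ (forall i' : 'I_t, i' != i -> A i' j = 0)).

Definition almost_rref (R : nzRingType) (t k : nat) (A : 'M[R]_(t, k)) : Prop :=
  exists s : 'S_t, is_rref (row_perm s A).

Definition rkF (F : fieldType) (L : fieldExtType F) (k : nat) (v : 'rV[L]_k) : nat :=
  \dim (<<[seq v ord0 j | j <- enum 'I_k]>>%VS).

From HB Require Import structures.
From mathcomp Require Import all_boot all_order all_algebra all_fingroup all_field.
From mathcomp Require Import zify.
Set Implicit Arguments.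
Unset Strict Implicit.
Unset Printing Implicit Defensive.
Import GRing.Theory.
Local Open Scope ring_scope.

(* The pivot column of row [i] of [M] has a single nonzero entry, equal to [1], so
   the entry of [v = \sum_i alpha_i M_i] in that column is [alpha_i]: the entries of
   [v] span every [alpha_i]. Take [alpha_2, ..., alpha_t] independent; in a column
   where [M_1] has an entry [c] outside [F_q], the entry of [v] is [alpha_1 c + y]
   with [y] fixed, and counting shows that [alpha_1] can be chosen so that this
   entry lies outside the span of [alpha_1, ..., alpha_t], giving [t + 1]
   independent entries. *)

Lemma exists_free_tuple (K : fieldType) (vT : vectType K) (n : nat) :
  (n <= \dim {:vT})%N -> exists s : n.-tuple vT, free s.
Proof.
move=> le_n_dim; set e := vbasis {:vT}.
have size_take : size (take n e) == n by rewrite size_take size_tuple; apply/eqP/minn_idPl.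
exists (Tuple size_take); apply: (@catl_free _ _ (drop n e)).
by rewrite /= cat_take_drop; exact: basis_free (vbasisP _).
Qed.

Section Escape.

Variables (F : finFieldType) (L : fieldExtType F).

Lemma card_vspace_fin (U : {vspace L}) :
  #|[set a : finvect_type L | a \in U]| = (#|F| ^ \dim U)%N.
Proof. by rewrite cardsE; exact: (card_vspace (U : {vspace finvect_type L})). Qed.

(* Counting: [a * c + y] lies in [<[a]> + U] iff [a = (u - y) / (c - l)] for some
   [u \in U] and [l \in F], which excludes at most [q^d + q * q^d < q^(d+2)] values. *)
Lemma exists_escape_line_addv (U : {vspace L}) (c y : L) :
  c \notin 1%VS -> (\dim U + 2 <= \dim {:L})%N ->
  exists2 a : L, a \notin U & a * c + y \notin (<[a]> + U)%VS.
Proof.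
move=> cF dimU; pose LT := finvect_type L.
have c_sub_neq0 (l : F) : c - l%:A != 0.
  by apply: contra cF; rewrite subr_eq0 => /eqP ->; rewrite rpredZ // memv_line.
pose g (p : F * LT) : LT := ((p.2 : L) - y) / (c - p.1%:A).
pose B : {set LT} := [set a : LT | a \in U] :|:
   [set g p | p in setX [set: F] [set u : LT | u \in U]].
have card_B : (#|B| < #|LT|)%N.
  have q_gt1 := card_finNzRing_gt1 F.
  have -> : #|LT| = (#|F| ^ \dim {:L})%N.
    by rewrite -card_vspace_fin; apply: eq_card => v; rewrite inE memvf.
  apply: (leq_ltn_trans (leq_card_setU _ _)).
  apply: (@leq_ltn_trans (#|F| ^ \dim U + #|F| * #|F| ^ \dim U)%N).
    rewrite card_vspace_fin leq_add2l; apply: (leq_trans (leq_imset_card _ _)).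
    by rewrite cardsX cardsT card_vspace_fin.
  apply: (@leq_trans (#|F| ^ (\dim U + 2))%N); last by rewrite leq_pexp2l ?(ltnW q_gt1).
  have : (0 < #|F| ^ \dim U)%N by rewrite expn_gt0 (ltnW q_gt1).
  rewrite expnD -mulnn; move: q_gt1; set q := #|F|; set X := (q ^ \dim U)%N.
  by nia.
have [a aB] : exists a : LT, a \notin B.
  apply/existsP; rewrite -negb_forall; apply: contraL card_B => /forallP B_full.
  by rewrite -leqNgt subset_leq_card //; apply/subsetP => a _; exact: B_full.
move: aB; rewrite !inE negb_or => /andP [aU aB]; exists a => //.
apply: contra aB => /memv_addP [_ /vlineP [l ->] [u uU Eu]].
apply/imsetP; exists (l, u); first by rewrite !inE.
have Eu' : u - y = a * (c - l%:A).
  by rewrite mulrBr mulr_algr; apply/eqP; rewrite subr_eq addrAC Eu addrC addKr.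
by rewrite /g /= Eu' mulfK.
Qed.

End Escape.

Lemma rref_pivot (R : nzRingType) (t k : nat) (A : 'M[R]_(t, k)) (i : 'I_t) :
  is_rref A -> row i A != 0 ->
  exists p : 'I_k, A i p = 1 /\ forall i', i' != i -> A i' p = 0.
Proof.
move=> [_ rref_col] rowi_neq0.
have [j Aij] : exists j, A i j != 0.
  apply/existsP; apply: contraR rowi_neq0; rewrite negb_exists => /forallP Ai0.
  by apply/eqP/rowP => j; rewrite !mxE; apply/eqP; rewrite -[_ == _]negbK Ai0.
case: (@arg_minnP _ j (fun j => A i j != 0) val Aij) => p Aip p_min.
exists p; apply: rref_col Aip _ => j' lt_j'p; apply/eqP.
by apply: contraTT lt_j'p => /p_min; rewrite leqNgt.
Qed.

Lemma almost_rref_pivot (R : nzRingType) (t k : nat) (A : 'M[R]_(t, k)) (i : 'I_t) :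
  almost_rref A -> row i A != 0 ->
  exists p : 'I_k, A i p = 1 /\ forall i', i' != i -> A i' p = 0.
Proof.
move=> [s rref_sA] rowi_neq0; pose sA := row_perm s A.
have sAE i' j : sA ((s^-1)%g i') j = A i' j by rewrite mxE permKV.
have [|p [sA1 sA0]] := rref_pivot (i := (s^-1)%g i) rref_sA.
  apply: contra rowi_neq0 => /eqP/rowP sA_row0; apply/eqP/rowP => j.
  by have := sA_row0 j; rewrite !mxE permKV.
exists p; split; first by rewrite -sAE.
move=> i' neq_i'i; rewrite -sAE; apply: sA0.
by apply: contra neq_i'i => /eqP/(congr1 s); rewrite !permKV => ->.
Qed.

Lemma row_free_row_neq0 (K : fieldType) (m n : nat) (A : 'M[K]_(m, n)) (i : 'I_m) :
  row_free A -> row i A != 0.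
Proof.
apply: contraL => /eqP rowi0; apply/row_freePn; exists i.
by rewrite rowi0 sub0mx.
Qed.

Lemma sum_scale_rows_coord (R : comNzRingType) (t k : nat) (A : 'M[R]_(t, k))
    (alpha : 'I_t -> R) (j : 'I_k) :
  (\sum_(i < t) alpha i *: row i A) ord0 j = \sum_(i < t) alpha i * A i j.
Proof. by rewrite summxE; apply: eq_bigr => i _; rewrite !mxE. Qed.

Lemma sum_scale_rows_pivot (R : comNzRingType) (t k : nat) (A : 'M[R]_(t, k))
    (alpha : 'I_t -> R) (i : 'I_t) (p : 'I_k) :
  A i p = 1 -> (forall i', i' != i -> A i' p = 0) ->
  (\sum_(i < t) alpha i *: row i A) ord0 p = alpha i.
Proof.
move=> Aip1 Ai'p0; rewrite sum_scale_rows_coord (bigD1 i) //= Aip1 mulr1.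
by rewrite big1 ?addr0 // => i' neq_i'i; rewrite Ai'p0 ?mulr0.
Qed.

Lemma rkF_ge_free (F : fieldType) (L : fieldExtType F) (k : nat) (v : 'rV[L]_k)
    (s : seq L) :
  free s -> {subset s <= [seq v ord0 j | j <- enum 'I_k]} -> (size s <= rkF v)%N.
Proof.
move=> free_s s_sub; rewrite -(eqnP free_s); apply: dimvS.
by apply/span_subvP => x /s_sub; exact: memv_span.
Qed.

Theorem proposition3p10 (F : finFieldType) (L : fieldExtType F) (t k : nat)
  (M : 'M[L]_(t, k)) :
  (1 <= t)%N -> (t < k)%N -> (k <= \dim {:L})%N ->
  \rank M = t ->
  almost_rref M ->
  (exists (i : 'I_t) (j : 'I_k), val i = 0%N /\ M i j \notin 1%VS) ->
  exists alpha : 'I_t -> L,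
    free [seq alpha i | i <- enum 'I_t] /\
    (t + 1 <= rkF (\sum_(i < t) alpha i *: row i M))%N.
Proof.
case: t M => [//|t] M _ lt_tk le_km rkM rrefM [i0 [j0 [i00 cF]]].
have i0E : i0 = ord0 by apply: val_inj.
rewrite {i00}i0E in cF.
have [s free_s] : exists s : t.-tuple L, free s.
  by apply: exists_free_tuple; exact: leq_trans (ltnW (ltnW lt_tk)) le_km.
pose y := \sum_(i < t) tnth s i * M (lift ord0 i) j0.
have dim_s : (\dim <<s>> + 2 <= \dim {:L})%N.
  by rewrite (eqnP free_s) size_tuple addn2 (leq_trans lt_tk).
have [a aU a_escape] := exists_escape_line_addv y cF dim_s.
pose alpha := [tuple of a :: s].
have free_alpha : free alpha by rewrite /= free_cons aU free_s.
exists (tnth alpha); rewrite map_tnth_enum; split => //.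
set v := \sum_(i < t.+1) _ *: _.
have v_j0 : v ord0 j0 = a * M ord0 j0 + y.
  rewrite sum_scale_rows_coord big_ord_recl tnth0; congr (_ + _).
  by apply: eq_bigr => i _; rewrite tnthS.
apply: (@leq_trans (size (v ord0 j0 :: alpha))); first by rewrite /= size_tuple addn1.
have v_entry j : v ord0 j \in [seq v ord0 j | j <- enum 'I_k].
  by apply: map_f; rewrite mem_enum.
have row_free_M : row_free M by rewrite /row_free rkM.
apply: rkF_ge_free; first by rewrite free_cons free_alpha andbT v_j0 /= span_cons.
move=> x; rewrite inE => /orP [/eqP -> // | /tnthP [r ->]].
have [p [Mrp1 Mr'p0]] := almost_rref_pivot rrefM (row_free_row_neq0 r row_free_M).
by rewrite -(sum_scale_rows_pivot (tnth alpha) Mrp1 Mr'p0).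
Qed.
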